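(* For every $\varepsilon>0$ there exists $d_0$ such that for every integer $d\ge d_0$ and every triangle-free graph $G$ on $n$ vertices with maximum degree $d$, \[ \frac{1}{|\mathcal I(G)|}\sum_{I\in\mathcal I(G)}|I| \;\ge\; (1-\varepsilon)\,\frac{\log d}{d}\,n. \] (Equivalently, the average size of an independent set of $G$ is at least $(1+o_d(1))\frac{\log d}{d}n$.)
   Context: $\mathcal I(G)$ denotes the set of all independent sets of $G$ (including the empty set). Logarithms are natural. $o_d(1)$ denotes a quantity tending to $0$ as $d\to\infty$, uniformly over all graphs in question. *)

From Stdlib Require Import Reals Lra Lia List Bool Arith.
Import ListNotations.
Open Scope R_scope.

(* A simple graph on vertex set {0,...,n-1} given by a boolean adjacency
   relation (values outside {0..n-1} are irrelevant). *)
Definition is_simple_graph (n : nat) (adj : nat -> nat -> bool) : Prop :=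
  (forall i j, (i < n)%nat -> (j < n)%nat -> adj i j = adj j i) /\
  (forall i, (i < n)%nat -> adj i i = false).

Definition triangle_free (n : nat) (adj : nat -> nat -> bool) : Prop :=
  forall i j k, (i < n)%nat -> (j < n)%nat -> (k < n)%nat ->
    ~ (adj i j = true /\ adj j k = true /\ adj i k = true).

Definition degree (n : nat) (adj : nat -> nat -> bool) (v : nat) : nat :=
  length (filter (fun u => adj v u) (seq 0 n)).

Definition max_degree (n : nat) (adj : nat -> nat -> bool) (d : nat) : Prop :=
  (forall v, (v < n)%nat -> (degree n adj v <= d)%nat) /\
  (exists v, (v < n)%nat /\ degree n adj v = d).

(* All subsets of {0..n-1}, encoded as bool lists of length n
   (entry i is true iff vertex i is in the subset). *)
Fixpoint all_subsets (n : nat) : list (list bool) :=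
  match n with
  | O => [[]]
  | S m => map (cons false) (all_subsets m) ++ map (cons true) (all_subsets m)
  end.

Definition independentb (n : nat) (adj : nat -> nat -> bool) (s : list bool) : bool :=
  forallb (fun i => forallb (fun j =>
     negb (nth i s false && nth j s false && adj i j)) (seq 0 n)) (seq 0 n).

(* I(G): the list of all independent sets (each subset exactly once,
   including the empty set). *)
Definition indep_sets (n : nat) (adj : nat -> nat -> bool) : list (list bool) :=
  filter (independentb n adj) (all_subsets n).

Definition set_size (s : list bool) : nat := count_occ Bool.bool_dec s true.

Definition avg_indep_size (n : nat) (adj : nat -> nat -> bool) : R :=
  INR (fold_right Nat.add 0%nat (map set_size (indep_sets n adj)))
  / INR (length (indep_sets n adj)).

(* Averaging over independent sets with weight [lam ^ |I|] (the hard-core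
   model) can only lower the average size when [lam <= 1], by Chebyshev's sum inequality,
   so it suffices to treat [lam = eps / 2].  Fix a vertex [v] and condition on the part [r]
   of [I] outside its closed neighbourhood.  By triangle-freeness the [Y] neighbours of [v]
   having no neighbour in [r] are pairwise non-adjacent, so the rest of [I] is either [{v}]
   or an arbitrary subset of them: [v] is occupied with conditional probability
   [lam / ((1 + lam) ^ Y + lam) >= c (1 + lam) ^ (- Y)], [c = lam / (1 + lam)], and the
   expected number of occupied neighbours is [Y lam (1 + lam) ^ (Y - 1) / ((1 + lam) ^ Y + lam)].
   Averaging over [v] with [M] the mean of [Y], convexity of the first bound gives
   [a >= c n exp (- M ln (1 + lam))] for the expected size [a], and since every vertex has at
   most [d] neighbours the second gives [d a >= c n (M - 1)].  Whatever [M] is, one of the two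
   yields [a >= (1 - eps) n ln d / d] for large [d]. *)

From Stdlib Require Import Reals Lra Lia List Bool.
Import ListNotations.
Open Scope R_scope.

Fixpoint lsum {A} (l : list A) (f : A -> R) : R :=
  match l with [] => 0 | x :: l' => f x + lsum l' f end.

Lemma lsum_app {A} (l1 l2 : list A) f : lsum (l1 ++ l2) f = lsum l1 f + lsum l2 f.
Proof. induction l1 as [|x l1 IH]; simpl; [lra | rewrite IH; lra]. Qed.

Lemma lsum_map {A B} (g : B -> A) l f : lsum (map g l) f = lsum l (fun x => f (g x)).
Proof. induction l; simpl; congruence. Qed.

Lemma lsum_ext {A} (l : list A) f g : (forall x, In x l -> f x = g x) -> lsum l f = lsum l g.
Proof. induction l; simpl; intros H; auto. rewrite H, IHl; auto. Qed.

Lemma lsum_plus {A} (l : list A) f g : lsum l (fun x => f x + g x) = lsum l f + lsum l g.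
Proof. induction l; simpl; lra. Qed.

Lemma lsum_minus {A} (l : list A) f g : lsum l (fun x => f x - g x) = lsum l f - lsum l g.
Proof. induction l; simpl; lra. Qed.

Lemma lsum_scal {A} (l : list A) f c : lsum l (fun x => c * f x) = c * lsum l f.
Proof. induction l; simpl; lra. Qed.

Lemma lsum_const {A} (l : list A) c : lsum l (fun _ => c) = INR (length l) * c.
Proof. induction l; simpl length; [simpl; ring|]. rewrite S_INR. simpl. rewrite IHl. ring. Qed.

Lemma lsum_zero {A} (l : list A) : lsum l (fun _ => 0) = 0.
Proof. rewrite lsum_const. ring. Qed.

Lemma lsum_le {A} (l : list A) f g : (forall x, In x l -> f x <= g x) -> lsum l f <= lsum l g.
Proof.
  induction l as [|x l IH]; simpl; intros H; [lra|].
  pose proof (H x (or_introl eq_refl)). pose proof (IH (fun y Hy => H y (or_intror Hy))). lra.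
Qed.

Lemma lsum_nonneg {A} (l : list A) f : (forall x, In x l -> 0 <= f x) -> 0 <= lsum l f.
Proof. intros H. rewrite <- (lsum_zero l). now apply lsum_le. Qed.

Lemma lsum_ge_elem {A} (l : list A) f x :
  (forall y, In y l -> 0 <= f y) -> In x l -> f x <= lsum l f.
Proof.
  induction l as [|y l IH]; simpl; intros H Hx; [contradiction|].
  pose proof (H y (or_introl eq_refl)).
  assert (Hl : forall z, In z l -> 0 <= f z) by auto.
  destruct Hx as [->|Hx].
  - pose proof (lsum_nonneg l f Hl). lra.
  - pose proof (IH Hl Hx). lra.
Qed.

Lemma lsum_swap {A B} (l1 : list A) (l2 : list B) (f : A -> B -> R) :
  lsum l1 (fun x => lsum l2 (fun y => f x y)) = lsum l2 (fun y => lsum l1 (fun x => f x y)).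
Proof.
  induction l1 as [|x l1 IH]; simpl.
  - induction l2; simpl; lra.
  - rewrite IH. symmetry. apply lsum_plus.
Qed.

Lemma lsum_mul {A} (l : list A) f g :
  lsum l f * lsum l g = lsum l (fun x => lsum l (fun y => f x * g y)).
Proof.
  rewrite <- (Rmult_comm (lsum l g)), <- lsum_scal. apply lsum_ext. intros x _.
  now rewrite Rmult_comm, <- lsum_scal.
Qed.

(* Chebyshev's sum inequality: symmetrising the double sum gives
   [2 (RHS - LHS) = - sum_x sum_y mu x mu y (f x - f y) (g x - g y)]. *)
Lemma lsum_chebyshev {A} (l : list A) (mu f g : A -> R) :
  (forall x, In x l -> 0 <= mu x) ->
  (forall x y, In x l -> In y l -> (f x - f y) * (g x - g y) <= 0) ->
  lsum l mu * lsum l (fun x => mu x * f x * g x)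
  <= lsum l (fun x => mu x * f x) * lsum l (fun x => mu x * g x).
Proof.
  intros Hmu Hfg. rewrite !lsum_mul.
  set (F := fun x y => mu x * f x * (mu y * g y) - mu x * (mu y * f y * g y)).
  assert (Hsym : 0 <= lsum l (fun x => lsum l (fun y => F x y + F y x))).
  { apply lsum_nonneg. intros x Hx. apply lsum_nonneg. intros y Hy. unfold F.
    pose proof (Hfg x y Hx Hy). pose proof (Rmult_le_pos _ _ (Hmu x Hx) (Hmu y Hy)).
    replace (_ + _) with (- (mu x * mu y) * ((f x - f y) * (g x - g y))) by ring.
    nra. }
  rewrite (lsum_ext l _ (fun x => lsum l (fun y => F x y) + lsum l (fun y => F y x)))
    in Hsym by (intros; apply lsum_plus).
  rewrite lsum_plus, (lsum_swap l l (fun x y => F y x)) in Hsym. unfold F in Hsym.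
  rewrite (lsum_ext l _ (fun x => lsum l (fun y => mu x * f x * (mu y * g y))
             - lsum l (fun y => mu x * (mu y * f y * g y)))) in Hsym
    by (intros; apply lsum_minus).
  rewrite lsum_minus in Hsym. lra.
Qed.

Definition sum_subsets (n : nat) (f : list bool -> R) : R := lsum (all_subsets n) f.

Lemma sum_subsets_O f : sum_subsets 0 f = f [].
Proof. unfold sum_subsets; simpl; lra. Qed.

Lemma sum_subsets_S n f :
  sum_subsets (S n) f
  = sum_subsets n (fun s => f (false :: s)) + sum_subsets n (fun s => f (true :: s)).
Proof. unfold sum_subsets; simpl. now rewrite lsum_app, !lsum_map. Qed.

Lemma sum_subsets_ext n f g : (forall s, f s = g s) -> sum_subsets n f = sum_subsets n g.
Proof. intros H; apply lsum_ext; auto. Qed.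

Lemma sum_subsets_plus n f g :
  sum_subsets n (fun s => f s + g s) = sum_subsets n f + sum_subsets n g.
Proof. apply lsum_plus. Qed.

Lemma sum_subsets_scal n f c : sum_subsets n (fun s => c * f s) = c * sum_subsets n f.
Proof. apply lsum_scal. Qed.

Lemma sum_subsets_zero n : sum_subsets n (fun _ => 0) = 0.
Proof. apply lsum_zero. Qed.

Lemma all_subsets_length n s : In s (all_subsets n) -> length s = n.
Proof.
  revert s; induction n; simpl; intros s H.
  - now destruct H as [<-|[]].
  - apply in_app_iff in H.
    destruct H as [H|H]; apply in_map_iff in H; destruct H as [t [<- Ht]]; simpl; auto.
Qed.

Lemma repeat_false_in_all_subsets n : In (repeat false n) (all_subsets n).
Proof. induction n; simpl; auto. apply in_app_iff. left. now apply in_map. Qed.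

Definition countn (n : nat) (P : nat -> bool) : nat := length (filter P (seq 0 n)).

Lemma countn_S n P :
  countn (S n) P = ((if P 0%nat then 1 else 0) + countn n (fun i => P (S i)))%nat.
Proof.
  unfold countn. simpl. rewrite <- seq_shift.
  assert (Hmap : forall l, length (filter P (map S l)) = length (filter (fun i => P (S i)) l)).
  { induction l; simpl; auto. destruct (P (S a)); simpl; auto. }
  destruct (P 0%nat); simpl; now rewrite Hmap.
Qed.

Lemma countn_ext n P Q : (forall i, (i < n)%nat -> P i = Q i) -> countn n P = countn n Q.
Proof.
  revert P Q; induction n; intros P Q H; auto. rewrite !countn_S, (H 0%nat) by lia.
  rewrite (IHn (fun i => P (S i)) (fun i => Q (S i))); auto. intros; apply H; lia.
Qed.

Lemma countn_false n : countn n (fun _ => false) = 0%nat.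
Proof. induction n; auto. now rewrite countn_S. Qed.

Lemma countn_orb n P Q : (forall i, (i < n)%nat -> P i && Q i = false) ->
  countn n (fun i => P i || Q i) = (countn n P + countn n Q)%nat.
Proof.
  revert P Q; induction n; intros P Q H; auto. rewrite !countn_S.
  rewrite (IHn (fun i => P (S i)) (fun i => Q (S i))) by (intros; apply H; lia).
  pose proof (H 0%nat ltac:(lia)).
  destruct (P 0%nat), (Q 0%nat); simpl in *; try discriminate; lia.
Qed.

Lemma countn_andb_eqb n P v : (v < n)%nat ->
  countn n (fun i => P i && (i =? v)%nat) = if P v then 1%nat else 0%nat.
Proof.
  revert P v; induction n; intros P v Hv; [lia|]. rewrite countn_S.
  destruct v as [|v].
  - rewrite (countn_ext _ _ (fun _ => false)) by (intros; now destruct (P (S i))).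
    rewrite countn_false. now destruct (P 0%nat).
  - rewrite (countn_ext n _ (fun i => P (S i) && (i =? v)%nat)) by reflexivity.
    rewrite (IHn (fun i => P (S i)) v) by lia. simpl. now rewrite andb_false_r.
Qed.

Lemma countn_INR n P : INR (countn n P) = lsum (seq 0 n) (fun i => if P i then 1 else 0).
Proof.
  unfold countn. induction (seq 0 n); simpl; [auto|].
  destruct (P a); simpl length; [rewrite S_INR, IHl; lra | rewrite IHl; lra].
Qed.

(* A bool list [t] is read as the subset [{i < n | nth i t false}]. *)
Definition card (n : nat) (t : list bool) : nat := countn n (fun i => nth i t false).

Lemma card_cons n b t : card (S n) (b :: t) = ((if b then 1 else 0) + card n t)%nat.
Proof. unfold card. now rewrite countn_S. Qed.

Definition subsetb (n : nat) (t : list bool) (A : nat -> bool) : bool :=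
  forallb (fun i => implb (nth i t false) (A i)) (seq 0 n).

Lemma subsetb_cons n b t A :
  subsetb (S n) (b :: t) A = implb b (A 0%nat) && subsetb n t (fun i => A (S i)).
Proof.
  unfold subsetb. simpl. rewrite <- seq_shift. f_equal.
  induction (seq 0 n); simpl; congruence.
Qed.

Lemma subsetbP n t A :
  subsetb n t A = true <-> (forall i, (i < n)%nat -> nth i t false = true -> A i = true).
Proof.
  unfold subsetb. rewrite forallb_forall. split.
  - intros H i Hi Ht. specialize (H i). rewrite in_seq, Ht in H. apply H. lia.
  - intros H i Hi. rewrite in_seq in Hi.
    destruct (nth i t false) eqn:E; simpl; auto. apply H; auto; lia.
Qed.

Lemma subsetb_trans n t A B : (forall i, (i < n)%nat -> A i = true -> B i = true) ->
  subsetb n t A = true -> subsetb n t B = true.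
Proof. rewrite !subsetbP. intros H1 H2 i Hi Ti. apply H1; auto. Qed.

Section Fugacity.
Variable lam : R.

Lemma sum_subsetb_pow n A :
  sum_subsets n (fun t => if subsetb n t A then lam ^ card n t else 0)
  = (1 + lam) ^ countn n A.
Proof.
  revert A; induction n; intros A; [now rewrite sum_subsets_O|].
  rewrite sum_subsets_S, countn_S.
  rewrite (sum_subsets_ext n _
             (fun t => if subsetb n t (fun i => A (S i)) then lam ^ card n t else 0))
    by (intros s; now rewrite subsetb_cons, card_cons).
  rewrite IHn. destruct (A 0%nat) eqn:EA.
  - rewrite (sum_subsets_ext n _
         (fun t => lam * (if subsetb n t (fun i => A (S i)) then lam ^ card n t else 0)))
      by (intros s; rewrite subsetb_cons, card_cons, EA; simpl;
          destruct (subsetb _ _ _); simpl; lra).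
    rewrite sum_subsets_scal, IHn. simpl. lra.
  - rewrite (sum_subsets_ext n _ (fun t => 0)) by (intros s; now rewrite subsetb_cons, EA).
    rewrite sum_subsets_zero. simpl. lra.
Qed.

Lemma sum_subsetb_count_pow n A B :
  (1 + lam) * sum_subsets n (fun t => if subsetb n t A
      then INR (countn n (fun i => nth i t false && B i)) * lam ^ card n t else 0)
  = INR (countn n (fun i => A i && B i)) * lam * (1 + lam) ^ countn n A.
Proof.
  revert A B; induction n; intros A B; [rewrite sum_subsets_O; simpl; lra|].
  pose proof (IHn (fun i => A (S i)) (fun i => B (S i))) as IH.
  set (X := sum_subsets n _) in IH.
  rewrite sum_subsets_S, !countn_S.
  rewrite (sum_subsets_ext n _ (fun t => if subsetb n t (fun i => A (S i))
      then INR (countn n (fun i => nth i t false && B (S i))) * lam ^ card n t else 0))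
    by (intros s; now rewrite subsetb_cons, card_cons, countn_S).
  fold X. destruct (A 0%nat) eqn:EA.
  - assert (Htrue : sum_subsets n (fun s => if subsetb (S n) (true :: s) A
          then INR (countn (S n) (fun i => nth i (true :: s) false && B i))
               * lam ^ card (S n) (true :: s) else 0)
        = lam * (if B 0%nat then 1 else 0) * (1 + lam) ^ countn n (fun i => A (S i))
          + lam * X).
    { unfold X. rewrite <- sum_subsetb_pow, <- !sum_subsets_scal, <- sum_subsets_plus.
      apply sum_subsets_ext. intros s.
      rewrite subsetb_cons, card_cons, countn_S, EA. simpl.
      destruct (subsetb _ _ _); [|lra]. rewrite plus_INR.
      destruct (B 0%nat); simpl; lra. }
    rewrite Htrue. simpl andb; simpl pow.
    transitivity ((1 + lam) * ((1 + lam) * X)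
      + lam * (if B 0%nat then 1 else 0) * ((1 + lam) * (1 + lam) ^ countn n (fun i => A (S i))));
      [ring|].
    rewrite IH, plus_INR. destruct (B 0%nat); simpl; ring.
  - rewrite (sum_subsets_ext n _ (fun t => 0)) by (intros s; now rewrite subsetb_cons, EA).
    rewrite sum_subsets_zero, Rplus_0_r. simpl andb; simpl pow. rewrite IH. simpl. lra.
Qed.

End Fugacity.

Fixpoint lunion (r t : list bool) : list bool :=
  match r, t with
  | a :: r', b :: t' => (a || b) :: lunion r' t'
  | [], _ => t
  | _, [] => r
  end.

Lemma nth_lunion i r t : nth i (lunion r t) false = nth i r false || nth i t false.
Proof.
  revert i t; induction r; intros i t; simpl; [now destruct i|].
  destruct t, i; simpl; rewrite ?orb_false_r; auto.
Qed.

Lemma sum_subsets_split n (p : nat -> bool) f :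
  sum_subsets n f
  = sum_subsets n (fun r => if subsetb n r (fun i => negb (p i)) then
      sum_subsets n (fun t => if subsetb n t p then f (lunion r t) else 0) else 0).
Proof.
  revert p f; induction n; intros p f; [unfold sum_subsets; simpl; ring|].
  rewrite sum_subsets_S, (IHn (fun i => p (S i)) (fun s => f (false :: s))),
    (IHn (fun i => p (S i)) (fun s => f (true :: s))), sum_subsets_S.
  destruct (p 0%nat) eqn:E.
  - rewrite (sum_subsets_ext n (fun s => if subsetb (S n) (true :: s) _ then _ else 0)
               (fun _ => 0)) by (intros s; now rewrite subsetb_cons, E).
    rewrite sum_subsets_zero, Rplus_0_r, <- sum_subsets_plus.
    apply sum_subsets_ext; intros r. rewrite subsetb_cons, E. simpl.
    destruct (subsetb n r _); [|lra]. rewrite sum_subsets_S.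
    f_equal; apply sum_subsets_ext; intros t; now rewrite subsetb_cons, E.
  - f_equal; apply sum_subsets_ext; intros r; rewrite subsetb_cons, E; simpl;
      destruct (subsetb n r _); try reflexivity;
      rewrite sum_subsets_S,
        (sum_subsets_ext n (fun s => if subsetb (S n) (true :: s) p then _ else 0)
           (fun _ => 0)) by (intros s; now rewrite subsetb_cons, E);
      rewrite sum_subsets_zero, Rplus_0_r;
      apply sum_subsets_ext; intros t; now rewrite subsetb_cons, E.
Qed.

Lemma independentbP n adj s : independentb n adj s = true <->
  (forall i j, (i < n)%nat -> (j < n)%nat ->
     nth i s false = true -> nth j s false = true -> adj i j = false).
Proof.
  unfold independentb. rewrite forallb_forall. split.
  - intros H i j Hi Hj Si Sj.
    assert (Hi' : In i (seq 0 n)) by (apply in_seq; lia).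
    assert (Hj' : In j (seq 0 n)) by (apply in_seq; lia).
    specialize (H i Hi'). rewrite forallb_forall in H. specialize (H j Hj').
    rewrite Si, Sj in H. now destruct (adj i j).
  - intros H i Hi. rewrite forallb_forall. intros j Hj. rewrite in_seq in Hi, Hj.
    destruct (nth i s false) eqn:Si, (nth j s false) eqn:Sj; simpl; auto.
    rewrite (H i j); auto; lia.
Qed.

Lemma independentb_repeat_false n adj : independentb n adj (repeat false n) = true.
Proof.
  apply independentbP. intros i j _ _ Hi. now rewrite nth_repeat in Hi.
Qed.

Lemma card_repeat_false n : card n (repeat false n) = 0%nat.
Proof.
  unfold card. rewrite (countn_ext n _ (fun _ => false)) by (intros; apply nth_repeat).
  apply countn_false.
Qed.

Definition hc_weight (n : nat) (adj : nat -> nat -> bool) (lam : R) (s : list bool) : R :=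
  if independentb n adj s then lam ^ card n s else 0.

Section Vertex.
Variables (n : nat) (adj : nat -> nat -> bool) (v : nat).
Hypothesis Hsimple : is_simple_graph n adj.
Hypothesis Htf : triangle_free n adj.
Hypothesis Hv : (v < n)%nat.

Definition center (i : nat) : bool := (i =? v)%nat.
Definition closed_nbhd (i : nat) : bool := center i || adj v i.
Definition outside_nbhd (i : nat) : bool := negb (closed_nbhd i).

Definition uncovered (r : list bool) (i : nat) : bool :=
  adj v i && forallb (fun x => negb (nth x r false && adj i x)) (seq 0 n).

Definition n_uncovered (r : list bool) : nat := countn n (uncovered r).

Lemma uncoveredP r i : uncovered r i = true <->
  adj v i = true /\ (forall x, (x < n)%nat -> nth x r false = true -> adj i x = false).
Proof.
  unfold uncovered. rewrite andb_true_iff, forallb_forall.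
  split; intros [H1 H2]; split; auto.
  - intros x Hx Rx. assert (Hx' : In x (seq 0 n)) by (apply in_seq; lia).
    specialize (H2 x Hx'). rewrite Rx in H2. now destruct (adj i x).
  - intros x Hx. rewrite in_seq in Hx.
    destruct (nth x r false) eqn:Rx; simpl; auto. rewrite H2; auto; lia.
Qed.

Lemma uncovered_center r : uncovered r v = false.
Proof.
  destruct (uncovered r v) eqn:E; auto. apply uncoveredP in E as [E _].
  destruct Hsimple as [_ Hirr]. now rewrite Hirr in E.
Qed.

Lemma subsetb_uncovered_nth_center r t : subsetb n t (uncovered r) = true -> nth v t false = false.
Proof.
  rewrite subsetbP. intros H. destruct (nth v t false) eqn:E; auto.
  specialize (H v Hv E). now rewrite uncovered_center in H.
Qed.

Lemma outside_nbhd_adj r i : subsetb n r outside_nbhd = true -> (i < n)%nat ->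
  nth i r false = true -> adj v i = false.
Proof.
  rewrite subsetbP. intros Hr Hi Ri. specialize (Hr i Hi Ri).
  unfold outside_nbhd, closed_nbhd in Hr. destruct (adj v i); auto.
  now rewrite orb_true_r in Hr.
Qed.

Lemma outside_nbhd_center r : subsetb n r outside_nbhd = true -> nth v r false = false.
Proof.
  rewrite subsetbP. intros Hr. destruct (nth v r false) eqn:E; auto.
  specialize (Hr v Hv E). unfold outside_nbhd, closed_nbhd, center in Hr.
  now rewrite Nat.eqb_refl in Hr.
Qed.

Section Split.
Variables r t : list bool.
Hypothesis Hr : subsetb n r outside_nbhd = true.
Hypothesis Ht : subsetb n t closed_nbhd = true.

Lemma independentb_lunion_uncovered :
  independentb n adj r = true -> subsetb n t (uncovered r) = true ->
  independentb n adj (lunion r t) = true.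
Proof.
  destruct Hsimple as [Hsym _]. rewrite !independentbP, subsetbP.
  intros Hind HU i j Hi Hj Si Sj. rewrite nth_lunion in Si, Sj.
  apply orb_true_iff in Si, Sj. destruct Si as [Ri|Ti], Sj as [Rj|Tj].
  - now apply Hind.
  - pose proof (HU j Hj Tj) as Uj. apply uncoveredP in Uj as [_ Uj]. rewrite Hsym; auto.
  - pose proof (HU i Hi Ti) as Ui. apply uncoveredP in Ui as [_ Ui]. auto.
  - pose proof (HU i Hi Ti) as Ai. apply uncoveredP in Ai as [Ai _].
    pose proof (HU j Hj Tj) as Aj. apply uncoveredP in Aj as [Aj _].
    destruct (adj i j) eqn:Aij; auto. exfalso. now apply (Htf v i j).
Qed.

Lemma independentb_lunion_center :
  independentb n adj r = true -> subsetb n t center = true ->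
  independentb n adj (lunion r t) = true.
Proof.
  destruct Hsimple as [Hsym Hirr]. intros Hind Hc. apply independentbP.
  rewrite independentbP in Hind. rewrite subsetbP in Hc. unfold center in Hc.
  intros i j Hi Hj Si Sj. rewrite nth_lunion in Si, Sj.
  apply orb_true_iff in Si, Sj. destruct Si as [Ri|Ti], Sj as [Rj|Tj].
  - now apply Hind.
  - pose proof (Hc j Hj Tj) as Ej. apply Nat.eqb_eq in Ej. subst j.
    rewrite Hsym; auto. now apply (outside_nbhd_adj r).
  - pose proof (Hc i Hi Ti) as Ei. apply Nat.eqb_eq in Ei. subst i.
    now apply (outside_nbhd_adj r).
  - pose proof (Hc i Hi Ti) as Ei. pose proof (Hc j Hj Tj) as Ej.
    apply Nat.eqb_eq in Ei, Ej. subst. auto.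
Qed.

(* Conversely, once [v] is in [t] no neighbour of [v] can be; otherwise every
   vertex of [t] is a neighbour of [v] with no neighbour in [r]. *)
Lemma independentb_lunion_inv :
  independentb n adj (lunion r t) = true ->
  independentb n adj r = true /\
  (subsetb n t (uncovered r) = true \/ (subsetb n t center = true /\ nth v t false = true)).
Proof.
  rewrite subsetbP in Ht. rewrite !independentbP, !subsetbP. intros H. split.
  { intros i j Hi Hj Ri Rj. apply H; auto; rewrite nth_lunion; [rewrite Ri|rewrite Rj]; auto. }
  destruct (nth v t false) eqn:Tv; [right; split; auto | left].
  - intros i Hi Ti. specialize (Ht i Hi Ti). unfold closed_nbhd in Ht.
    destruct (center i) eqn:Ci; auto. simpl in Ht.
    assert (adj v i = false)
      by (apply H; auto; rewrite nth_lunion; [rewrite Tv|rewrite Ti]; apply orb_true_r).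
    congruence.
  - intros i Hi Ti. specialize (Ht i Hi Ti). unfold closed_nbhd, center in Ht.
    destruct (i =? v)%nat eqn:Eiv.
    { apply Nat.eqb_eq in Eiv. subst. congruence. }
    apply uncoveredP. split; auto. intros x Hx Rx.
    apply H; auto; rewrite nth_lunion; [rewrite Ti; apply orb_true_r | now rewrite Rx].
Qed.

Lemma independentb_lunion :
  independentb n adj (lunion r t)
  = independentb n adj r
    && (subsetb n t (uncovered r) || (subsetb n t center && nth v t false)).
Proof.
  apply eq_iff_eq_true. rewrite andb_true_iff, orb_true_iff, andb_true_iff. split.
  - apply independentb_lunion_inv.
  - intros [Hind [HU | [Hc _]]].
    + now apply independentb_lunion_uncovered.
    + now apply independentb_lunion_center.
Qed.

Lemma card_lunion : card n (lunion r t) = (card n r + card n t)%nat.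
Proof.
  unfold card. rewrite (countn_ext n _ (fun i => nth i r false || nth i t false))
    by (intros; apply nth_lunion).
  apply countn_orb. intros i Hi. rewrite subsetbP in Hr, Ht.
  destruct (nth i r false) eqn:Ri, (nth i t false) eqn:Ti; auto.
  specialize (Hr i Hi Ri). specialize (Ht i Hi Ti). unfold outside_nbhd in Hr.
  now rewrite Ht in Hr.
Qed.

End Split.

Variable lam : R.
Hypothesis Hlam : 0 < lam.

Definition outer_weight (r : list bool) : R :=
  if subsetb n r outside_nbhd then hc_weight n adj lam r else 0.

Lemma sum_nbhd_extensions (g : list bool -> R) r : subsetb n r outside_nbhd = true ->
  sum_subsets n (fun t => if subsetb n t closed_nbhd
                          then hc_weight n adj lam (lunion r t) * g t else 0)
  = hc_weight n adj lam r *
    (sum_subsets n (fun t => if subsetb n t (uncovered r) then lam ^ card n t * g t else 0)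
     + sum_subsets n (fun t => if subsetb n t center
                             then (if nth v t false then 1 else 0) * lam ^ card n t * g t
                             else 0)).
Proof.
  intros Hr. rewrite <- sum_subsets_plus, <- sum_subsets_scal. apply sum_subsets_ext. intros t.
  destruct (subsetb n t closed_nbhd) eqn:Ht.
  - unfold hc_weight. rewrite independentb_lunion, card_lunion, pow_add by auto.
    destruct (independentb n adj r); simpl; [|ring].
    destruct (subsetb n t (uncovered r)) eqn:HU.
    + rewrite (subsetb_uncovered_nth_center r t HU). destruct (subsetb n t center); simpl; ring.
    + destruct (subsetb n t center), (nth v t false); simpl; ring.
  - assert (HU : subsetb n t (uncovered r) = false).
    { destruct (subsetb n t (uncovered r)) eqn:E; auto. rewrite <- Ht. symmetry.
      apply (subsetb_trans n t (uncovered r)); auto. intros i Hi Ui.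
      apply uncoveredP in Ui as [Ui _]. unfold closed_nbhd. now rewrite Ui, orb_true_r. }
    assert (Hc : subsetb n t center = false).
    { destruct (subsetb n t center) eqn:E; auto. rewrite <- Ht. symmetry.
      apply (subsetb_trans n t center); auto. intros i Hi Ci. unfold closed_nbhd. now rewrite Ci. }
    rewrite HU, Hc. ring.
Qed.

(* Conditioning on the part [r] of [s] outside the closed neighbourhood of [v]. *)
Lemma sum_hc_weight_by_nbhd (g g' : list bool -> R) :
  (forall r t, subsetb n r outside_nbhd = true -> subsetb n t closed_nbhd = true ->
     g (lunion r t) = g' t) ->
  sum_subsets n (fun s => hc_weight n adj lam s * g s)
  = sum_subsets n (fun r => outer_weight r *
      (sum_subsets n (fun t => if subsetb n t (uncovered r) then lam ^ card n t * g' t else 0)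
       + sum_subsets n (fun t => if subsetb n t center
                               then (if nth v t false then 1 else 0) * lam ^ card n t * g' t
                               else 0))).
Proof.
  intros Hg. rewrite (sum_subsets_split n closed_nbhd). apply sum_subsets_ext. intros r.
  unfold outer_weight. change (fun i => negb (closed_nbhd i)) with outside_nbhd.
  destruct (subsetb n r outside_nbhd) eqn:Hr; [|ring].
  rewrite <- sum_nbhd_extensions by auto. apply sum_subsets_ext. intros t.
  destruct (subsetb n t closed_nbhd) eqn:Ht; auto. now rewrite Hg.
Qed.

Lemma sum_subsetb_center_pow :
  sum_subsets n (fun t => if subsetb n t center
                          then (if nth v t false then 1 else 0) * lam ^ card n t else 0)
  = lam.
Proof.
  assert (Hc : forall P, countn n (fun i => P i && center i) = if P v then 1%nat else 0%nat)
    by (intros; now apply countn_andb_eqb).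
  pose proof (sum_subsetb_count_pow lam n center center) as H.
  rewrite (countn_ext n (fun i => center i && center i) (fun i => true && center i)),
    (Hc (fun _ => true)), (countn_ext n center (fun i => true && center i)),
    (Hc (fun _ => true)) in H by (intros; now destruct (center i)).
  rewrite (sum_subsets_ext n _ (fun t => if subsetb n t center
      then (if nth v t false then 1 else 0) * lam ^ card n t else 0)) in H
    by (intros t; rewrite (Hc (fun i => nth i t false)); now destruct (nth v t false)).
  simpl in H. apply Rmult_eq_reg_l with (1 + lam); [|lra]. rewrite H. ring.
Qed.

Lemma partition_function_by_nbhd :
  sum_subsets n (hc_weight n adj lam)
  = sum_subsets n (fun r => outer_weight r * ((1 + lam) ^ n_uncovered r + lam)).
Proof.
  rewrite (sum_subsets_ext n _ (fun s => hc_weight n adj lam s * 1)) by (intros; ring).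
  rewrite (sum_hc_weight_by_nbhd (fun _ => 1) (fun _ => 1)) by auto.
  apply sum_subsets_ext. intros r. f_equal. f_equal.
  - unfold n_uncovered. rewrite <- (sum_subsetb_pow lam n). apply sum_subsets_ext. intros t.
    destruct (subsetb _ _ _); ring.
  - etransitivity; [|apply sum_subsetb_center_pow]. apply sum_subsets_ext. intros t.
    destruct (subsetb _ _ _); ring.
Qed.

Lemma occupancy_by_nbhd :
  sum_subsets n (fun s => hc_weight n adj lam s * (if nth v s false then 1 else 0))
  = sum_subsets n (fun r => outer_weight r * lam).
Proof.
  rewrite (sum_hc_weight_by_nbhd _ (fun t => if nth v t false then 1 else 0)).
  - apply sum_subsets_ext. intros r. f_equal.
    rewrite (sum_subsets_ext n (fun t => if subsetb n t (uncovered r) then _ else 0) (fun _ => 0))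
      by (intros t; destruct (subsetb n t (uncovered r)) eqn:HU;
          [now rewrite (subsetb_uncovered_nth_center r t HU), Rmult_0_r | reflexivity]).
    rewrite sum_subsets_zero, Rplus_0_l.
    etransitivity; [|apply sum_subsetb_center_pow]. apply sum_subsets_ext. intros t. destruct (subsetb _ _ _), (nth v t false); ring.
  - intros r t Hr _. now rewrite nth_lunion, (outside_nbhd_center r Hr).
Qed.

Lemma nbhd_occupancy_by_nbhd :
  sum_subsets n (fun s => hc_weight n adj lam s * INR (countn n (fun i => nth i s false && adj v i)))
  = sum_subsets n (fun r => outer_weight r *
      (INR (n_uncovered r) * lam * (1 + lam) ^ n_uncovered r / (1 + lam))).
Proof.
  rewrite (sum_hc_weight_by_nbhd _ (fun t => INR (countn n (fun i => nth i t false && adj v i)))).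
  - apply sum_subsets_ext. intros r. f_equal.
    rewrite (sum_subsets_ext n (fun t => if subsetb n t center then _ else 0) (fun _ => 0)).
    + rewrite sum_subsets_zero, Rplus_0_r.
      apply Rmult_eq_reg_l with (1 + lam); [|lra].
      replace ((1 + lam) * (_ / (1 + lam))) with
        (INR (n_uncovered r) * lam * (1 + lam) ^ n_uncovered r) by (field; lra).
      unfold n_uncovered.
      rewrite (countn_ext n (uncovered r) (fun i => uncovered r i && adj v i)) at 1
        by (intros i _; destruct (uncovered r i) eqn:U; auto; apply uncoveredP in U;
            now rewrite (proj1 U)).
      rewrite <- sum_subsetb_count_pow. f_equal. apply sum_subsets_ext. intros t.
      destruct (subsetb _ _ _); ring.
    + intros t. destruct (subsetb n t center) eqn:Hc; auto.
      rewrite (countn_ext n _ (fun _ => false)), countn_false; [simpl; ring|].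
      intros i Hi. destruct (nth i t false) eqn:Ti; auto.
      rewrite subsetbP in Hc. specialize (Hc i Hi Ti). unfold center in Hc.
      apply Nat.eqb_eq in Hc. subst. destruct Hsimple as [_ Hirr]. now rewrite Hirr.
  - intros r t Hr _. f_equal. apply countn_ext. intros i Hi. rewrite nth_lunion.
    destruct (nth i r false) eqn:Ri; auto. simpl.
    rewrite (outside_nbhd_adj r i Hr Hi Ri). now rewrite andb_false_r.
Qed.

End Vertex.

Lemma bernoulli_pow lam k : 0 <= lam -> 1 + lam * INR k <= (1 + lam) ^ k.
Proof.
  intros H. induction k; [simpl; lra|]. rewrite S_INR. simpl pow.
  assert (0 <= lam * INR k) by (apply Rmult_le_pos; auto; apply pos_INR). nra.
Qed.

Lemma exp_tangent x a : exp a * (1 + (x - a)) <= exp x.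
Proof.
  replace x with (a + (x - a)) at 2 by ring. rewrite exp_plus.
  apply Rmult_le_compat_l; [left; apply exp_pos | apply exp_ineq1_le].
Qed.

(* The two pointwise estimates behind the proof, for a vertex with [k] uncovered
   neighbours: its conditional occupancy [lam / ((1 + lam) ^ k + lam)] is at least
   [c (1 + lam) ^ (- k)], which is convex in [k] and so above its tangent at [M]. *)
Lemma occupancy_tangent_bound lam (k : nat) M : 0 < lam ->
  let c := lam / (1 + lam) in let L := ln (1 + lam) in
  c * ((1 + lam) ^ k + lam) * (exp (- (L * M)) * (1 + L * M - L * INR k)) <= lam.
Proof.
  intros Hlam c L. pose proof (bernoulli_pow lam k ltac:(lra)). pose proof (pos_INR k).
  set (P := (1 + lam) ^ k) in *. assert (HP : 1 <= P) by nra.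
  assert (HexpP : exp (- (L * INR k)) = / P).
  { unfold L, P. rewrite exp_Ropp, Rmult_comm, <- ln_pow, exp_ln by (try apply pow_lt; lra).
    reflexivity. }
  pose proof (exp_tangent (- (L * INR k)) (- (L * M))) as Htan. rewrite HexpP in Htan.
  assert (Hc : 0 <= c * (P + lam)) by (unfold c; apply Rmult_le_pos;
    [apply Rmult_le_pos; [lra | left; apply Rinv_0_lt_compat; lra] | lra]).
  apply Rle_trans with (c * (P + lam) * / P).
  - apply Rmult_le_compat_l; [auto | rewrite <- Htan; right; ring].
  - unfold c. apply Rmult_le_reg_r with ((1 + lam) * P); [nra|].
    replace (lam / (1 + lam) * (P + lam) * / P * ((1 + lam) * P)) with (lam * (P + lam))
      by (field; lra). nra.
Qed.

Lemma occupancy_degree_bound lam (k : nat) : 0 < lam ->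
  lam / (1 + lam) * ((1 + lam) ^ k + lam) * (INR k - 1)
  <= INR k * lam * (1 + lam) ^ k / (1 + lam).
Proof.
  intros Hlam. pose proof (bernoulli_pow lam k ltac:(lra)).
  set (P := (1 + lam) ^ k) in *.
  apply Rmult_le_reg_r with (1 + lam); [lra|].
  replace (lam / (1 + lam) * (P + lam) * (INR k - 1) * (1 + lam))
    with (lam * ((P + lam) * (INR k - 1))) by (field; lra).
  replace (INR k * lam * P / (1 + lam) * (1 + lam)) with (lam * (INR k * P)) by (field; lra).
  apply Rmult_le_compat_l; nra.
Qed.

Definition partition_function (n : nat) (adj : nat -> nat -> bool) (lam : R) : R :=
  sum_subsets n (hc_weight n adj lam).

Definition size_moment (n : nat) (adj : nat -> nat -> bool) (lam : R) : R :=
  sum_subsets n (fun s => hc_weight n adj lam s * INR (card n s)).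

Definition vertex_sum (n : nat) (h : nat -> list bool -> R) : R :=
  lsum (seq 0 n) (fun v => sum_subsets n (h v)).

Lemma vertex_sum_linear n a b h1 h2 :
  vertex_sum n (fun v r => a * h1 v r + b * h2 v r) = a * vertex_sum n h1 + b * vertex_sum n h2.
Proof.
  unfold vertex_sum. rewrite <- !lsum_scal, <- lsum_plus. apply lsum_ext. intros.
  now rewrite sum_subsets_plus, !sum_subsets_scal.
Qed.

Lemma vertex_sum_le n h1 h2 : (forall v r, (v < n)%nat -> h1 v r <= h2 v r) ->
  vertex_sum n h1 <= vertex_sum n h2.
Proof.
  intros H. apply lsum_le. intros v Hv. apply in_seq in Hv. apply lsum_le.
  intros; apply H; lia.
Qed.

Lemma hc_weight_nonneg n adj lam s : 0 <= lam -> 0 <= hc_weight n adj lam s.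
Proof. intros H. unfold hc_weight. destruct (independentb n adj s); [now apply pow_le | lra]. Qed.

Lemma outer_weight_nonneg n adj v lam r : 0 <= lam -> 0 <= outer_weight n adj v lam r.
Proof. intros H. unfold outer_weight. destruct (subsetb _ _ _); [now apply hc_weight_nonneg | lra]. Qed.

Lemma partition_function_pos n adj lam : 0 < lam -> 0 < partition_function n adj lam.
Proof.
  intros H. eapply Rlt_le_trans; [|apply (lsum_ge_elem _ _ (repeat false n))].
  - unfold hc_weight. rewrite independentb_repeat_false, card_repeat_false. simpl. lra.
  - intros s _. apply hc_weight_nonneg. lra.
  - apply repeat_false_in_all_subsets.
Qed.

Section Estimates.
Variables (n : nat) (adj : nat -> nat -> bool) (d : nat) (lam : R).
Hypothesis Hsimple : is_simple_graph n adj.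
Hypothesis Htf : triangle_free n adj.
Hypothesis Hdeg : forall v, (v < n)%nat -> (degree n adj v <= d)%nat.
Hypothesis Hlam : 0 < lam.

Let c := lam / (1 + lam).
Let L := ln (1 + lam).
Let Y v r := INR (n_uncovered n adj v r).

Definition nbhd_weight (v : nat) (r : list bool) : R :=
  outer_weight n adj v lam r * ((1 + lam) ^ n_uncovered n adj v r + lam).

Lemma vertex_sum_nbhd_weight : vertex_sum n nbhd_weight = INR n * partition_function n adj lam.
Proof.
  unfold vertex_sum. rewrite (lsum_ext _ _ (fun _ => partition_function n adj lam)).
  - now rewrite lsum_const, length_seq.
  - intros v Hv. apply in_seq in Hv. symmetry. apply partition_function_by_nbhd; auto; lia.
Qed.

Lemma size_moment_by_nbhd :
  size_moment n adj lam = vertex_sum n (fun v r => outer_weight n adj v lam r * lam).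
Proof.
  unfold vertex_sum.
  rewrite (lsum_ext _ _ (fun v => sum_subsets n (fun s =>
             hc_weight n adj lam s * (if nth v s false then 1 else 0)))).
  2:{ intros v Hv. apply in_seq in Hv. symmetry. apply occupancy_by_nbhd; auto; lia. }
  unfold size_moment, sum_subsets. rewrite <- lsum_swap. apply lsum_ext. intros s _.
  unfold card. now rewrite countn_INR, <- lsum_scal.
Qed.

Lemma degree_INR i : (i < n)%nat ->
  INR (degree n adj i) = lsum (seq 0 n) (fun v => if adj v i then 1 else 0).
Proof.
  intros Hi. change (degree n adj i) with (countn n (adj i)). rewrite countn_INR.
  apply lsum_ext. intros v Hv. apply in_seq in Hv. destruct Hsimple as [Hsym _].
  rewrite Hsym by lia. reflexivity.
Qed.

(* Double counting: each vertex of [s] has at most [d] neighbours. *)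
Lemma vertex_sum_nbhd_occupancy_le :
  vertex_sum n (fun v r => outer_weight n adj v lam r
    * (Y v r * lam * (1 + lam) ^ n_uncovered n adj v r / (1 + lam)))
  <= INR d * size_moment n adj lam.
Proof.
  unfold vertex_sum.
  rewrite (lsum_ext _ _ (fun v => sum_subsets n (fun s =>
             hc_weight n adj lam s * INR (countn n (fun i => nth i s false && adj v i))))).
  2:{ intros v Hv. apply in_seq in Hv. symmetry. apply nbhd_occupancy_by_nbhd; auto; lia. }
  unfold size_moment, sum_subsets. rewrite <- lsum_swap, <- lsum_scal. apply lsum_le. intros s _.
  rewrite lsum_scal, (Rmult_comm (INR d)), Rmult_assoc.
  apply Rmult_le_compat_l; [apply hc_weight_nonneg; lra|].
  rewrite (lsum_ext _ _ (fun v => lsum (seq 0 n) (fun i => if nth i s false && adj v i then 1 else 0)))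
    by (intros; apply countn_INR).
  rewrite lsum_swap. unfold card. rewrite countn_INR, Rmult_comm, <- lsum_scal.
  apply lsum_le. intros i Hi. apply in_seq in Hi. destruct (nth i s false); simpl.
  - rewrite Rmult_1_r, <- degree_INR by lia. apply le_INR, Hdeg. lia.
  - rewrite lsum_zero. lra.
Qed.

Definition nbhd_moment : R := vertex_sum n (fun v r => nbhd_weight v r * Y v r).

Lemma size_moment_ge_tangent M :
  c * exp (- (L * M)) * ((1 + L * M) * vertex_sum n nbhd_weight - L * nbhd_moment)
  <= size_moment n adj lam.
Proof.
  unfold nbhd_moment. rewrite size_moment_by_nbhd.
  replace (c * _ * _) with (c * exp (- (L * M)) * (1 + L * M) * vertex_sum n nbhd_weight
                            + (- (c * exp (- (L * M)) * L)) * vertex_sum n (fun v r => nbhd_weight v r * Y v r))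
    by ring.
  rewrite <- vertex_sum_linear. apply vertex_sum_le. intros v r _. unfold nbhd_weight.
  pose proof (occupancy_tangent_bound lam (n_uncovered n adj v r) M Hlam) as Hocc.
  pose proof (outer_weight_nonneg n adj v lam r ltac:(lra)) as Hw.
  fold c L in Hocc. unfold Y.
  set (w := outer_weight n adj v lam r) in *.
  apply Rle_trans with (w * (c * ((1 + lam) ^ n_uncovered n adj v r + lam)
      * (exp (- (L * M)) * (1 + L * M - L * INR (n_uncovered n adj v r))))).
  - right. ring.
  - now apply Rmult_le_compat_l.
Qed.

Lemma size_moment_ge_degree :
  c * (nbhd_moment - vertex_sum n nbhd_weight) <= INR d * size_moment n adj lam.
Proof.
  eapply Rle_trans; [|apply vertex_sum_nbhd_occupancy_le]. unfold nbhd_moment.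
  replace (c * _) with (c * vertex_sum n (fun v r => nbhd_weight v r * Y v r)
                        + (- c) * vertex_sum n nbhd_weight) by ring.
  rewrite <- vertex_sum_linear. apply vertex_sum_le. intros v r _. unfold nbhd_weight, Y.
  pose proof (occupancy_degree_bound lam (n_uncovered n adj v r) Hlam) as Hdeg_occ.
  pose proof (outer_weight_nonneg n adj v lam r ltac:(lra)) as Hw.
  set (w := outer_weight n adj v lam r) in *.
  apply Rle_trans with (w * (c * ((1 + lam) ^ n_uncovered n adj v r + lam)
      * (INR (n_uncovered n adj v r) - 1))).
  - right. ring.
  - now apply Rmult_le_compat_l.
Qed.

(* With [M] the [nbhd_weight]-average number of uncovered neighbours, the tangent
   terms cancel. *)
Lemma average_occupancy_constraints : (0 < n)%nat ->
  exists M, c * INR n * exp (- (L * M)) <= size_moment n adj lam / partition_function n adj lam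
    /\ c * INR n * (M - 1) <= INR d * (size_moment n adj lam / partition_function n adj lam).
Proof.
  intros Hn. pose proof (partition_function_pos n adj lam Hlam) as HZ.
  pose proof vertex_sum_nbhd_weight as HW.
  set (Z := partition_function n adj lam) in *. set (S1 := size_moment n adj lam) in *.
  assert (Hn' : 0 < INR n) by (apply lt_0_INR; lia).
  assert (HnZ : 0 < INR n * Z) by (apply Rmult_lt_0_compat; auto).
  exists (nbhd_moment / (INR n * Z)). split.
  - pose proof (size_moment_ge_tangent (nbhd_moment / (INR n * Z))) as H. fold S1 in H.
    rewrite HW in H.
    replace ((1 + L * (nbhd_moment / (INR n * Z))) * (INR n * Z) - L * nbhd_moment)
      with (INR n * Z) in H by (field; split; lra).
    apply Rmult_le_reg_r with Z; auto.
    replace (S1 / Z * Z) with S1 by (field; lra). lra.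
  - pose proof size_moment_ge_degree as H. fold S1 in H. rewrite HW in H.
    apply Rmult_le_reg_r with Z; auto.
    replace (INR d * (S1 / Z) * Z) with (INR d * S1) by (field; lra).
    replace (c * INR n * (nbhd_moment / (INR n * Z) - 1) * Z)
      with (c * (nbhd_moment - INR n * Z)) by (field; split; lra).
    exact H.
Qed.

End Estimates.

Lemma exp_le_compat x y : x <= y -> exp x <= exp y.
Proof. intros [H|H]; [left; now apply exp_increasing | subst; lra]. Qed.

Lemma ln_le_of_le_exp x y : 0 < x -> x <= exp y -> ln x <= y.
Proof.
  intros Hx H. destruct (Rle_lt_dec (ln x) y) as [|Hlt]; auto.
  apply exp_increasing in Hlt. rewrite exp_ln in Hlt; lra.
Qed.

Lemma le_ln_of_exp_le x y : 0 < x -> exp y <= x -> y <= ln x.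
Proof.
  intros Hx H. destruct (Rle_lt_dec y (ln x)) as [|Hlt]; auto.
  apply exp_increasing in Hlt. rewrite exp_ln in Hlt; lra.
Qed.

Lemma linear_le_exp B delta x : 0 < delta -> 0 <= x -> 4 * B <= delta ^ 2 * x ->
  B * x <= exp (delta * x).
Proof.
  intros Hdelta Hx HB. set (y := delta * x / 2).
  assert (Hy : 0 <= y) by (unfold y; apply Rmult_le_pos; [apply Rmult_le_pos|]; lra).
  replace (exp (delta * x)) with (exp y * exp y) by (rewrite <- exp_plus; f_equal; unfold y; field).
  pose proof (exp_ineq1_le y).
  apply Rle_trans with (y * y); [|nra].
  assert (4 * B * x <= delta ^ 2 * x * x) by (apply Rmult_le_compat_r; auto).
  unfold y. nra.
Qed.

Section LargeDegree.
Variable eps : R.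
Hypothesis Heps : 0 < eps <= 1/2.

Let lam := eps / 2.
Let c := lam / (1 + lam).
Let L := ln (1 + lam).

Let lam_pos : 0 < lam. Proof. unfold lam; lra. Qed.
Let c_pos : 0 < c. Proof. unfold c; apply Rdiv_lt_0_compat; lra. Qed.
Let L_nonneg : 0 <= L.
Proof. unfold L; rewrite <- ln_1; left; apply ln_increasing; lra. Qed.
Let L_le_lam : L <= lam.
Proof. apply ln_le_of_le_exp; [lra | apply exp_ineq1_le]. Qed.

(* The choice [lam = eps / 2] is what makes [(1 + lam) (1 - eps) <= 1 - lam]. *)
Lemma tangent_point_bound x M : 0 <= x -> c * (M - 1) < (1 - eps) * x ->
  L * M <= L + (1 - lam) * x.
Proof.
  intros Hx Hcase.
  assert (HM : c * M <= c + (1 - eps) * x) by lra.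
  assert (Heps2 : (1 + lam) * (1 - eps) <= 1 - lam) by (unfold lam; nra).
  assert (Hx' : 0 <= (1 - eps) * x) by (apply Rmult_le_pos; lra).
  apply Rmult_le_reg_l with c; auto.
  apply Rle_trans with (L * (c + (1 - eps) * x)).
  { pose proof (Rmult_le_compat_l L _ _ L_nonneg HM). lra. }
  apply Rle_trans with (c * L + lam * ((1 - eps) * x)).
  { pose proof (Rmult_le_compat_r _ _ _ Hx' L_le_lam). lra. }
  replace (lam * ((1 - eps) * x)) with (c * ((1 + lam) * (1 - eps) * x)) by (unfold c; field; lra).
  pose proof (Rmult_le_compat_r x _ _ Hx Heps2) as H.
  pose proof (Rmult_le_compat_l c _ _ (Rlt_le _ _ c_pos) H). lra.
Qed.

(* For [x = ln d]: either the degree constraint already gives [d a >= (1 - eps) x X], or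
   [M] is at most about [(1 - eps) x / c], and then [exp (- L M) >= d ^ (lam - 1) / (1 + lam)]
   makes the first constraint strong enough once [d ^ lam] beats [ln d]. *)
Lemma log_bound_of_occupancy_constraints :
  exists d0 : nat, (1 <= d0)%nat /\ forall d : nat, (d0 <= d)%nat ->
  forall a M X : R, 0 <= X -> c * X * exp (- (L * M)) <= a -> c * X * (M - 1) <= INR d * a ->
  (1 - eps) * (ln (INR d) / INR d) * X <= a.
Proof.
  set (B := (1 + lam) / c).
  assert (HB : 0 < B) by (unfold B; apply Rdiv_lt_0_compat; lra).
  destruct (INR_unbounded (exp (4 * B / lam ^ 2))) as [N HN].
  exists (S N). split; [lia|]. intros d Hd a M X HX HA HD.
  assert (Hd1 : 1 <= INR d) by (apply (le_INR 1); lia).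
  set (x := ln (INR d)).
  assert (Hx : 0 <= x) by (apply le_ln_of_exp_le; [lra | rewrite exp_0; lra]).
  assert (Hdx : INR d = exp x) by (unfold x; rewrite exp_ln; lra).
  assert (HxB : 4 * B <= lam ^ 2 * x).
  { assert (4 * B / lam ^ 2 <= x) by (apply le_ln_of_exp_le; [lra|];
      apply Rle_trans with (INR N); [lra | apply le_INR; lia]).
    replace (4 * B) with (4 * B / lam ^ 2 * lam ^ 2) by (field; lra).
    rewrite (Rmult_comm (lam ^ 2)). apply Rmult_le_compat_r; [apply pow_le|]; lra. }
  enough (Hda : (1 - eps) * x * X <= INR d * a).
  { apply Rmult_le_reg_l with (INR d); [lra|].
    now replace (INR d * ((1 - eps) * (x / INR d) * X)) with ((1 - eps) * x * X) by (field; lra). }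
  destruct (Rle_lt_dec ((1 - eps) * x) (c * (M - 1))) as [Hcase|Hcase].
  - apply Rle_trans with (c * X * (M - 1)); [|exact HD].
    replace (c * X * (M - 1)) with (c * (M - 1) * X) by ring. apply Rmult_le_compat_r; lra.
  - assert (Hexp : exp (lam * x) / ((1 + lam) * INR d) <= exp (- (L * M))).
    { pose proof (tangent_point_bound x M Hx Hcase).
      apply Rle_trans with (exp (- (L + (1 - lam) * x))); [|apply exp_le_compat; lra].
      replace (- (L + (1 - lam) * x)) with (- L + - x + lam * x) by ring.
      rewrite !exp_plus, !exp_Ropp, Hdx. unfold L. rewrite exp_ln by lra.
      right. field. split; [apply exp_neq_0 | lra]. }
    assert (HBx : x <= exp (lam * x) / B).
    { apply Rmult_le_reg_l with B; auto.
      replace (B * (exp (lam * x) / B)) with (exp (lam * x)) by (field; lra).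
      now apply linear_le_exp. }
    apply Rle_trans with (INR d * (c * X * exp (- (L * M)))); [|apply Rmult_le_compat_l; lra].
    apply Rle_trans with (INR d * (c * X * (exp (lam * x) / ((1 + lam) * INR d)))).
    2:{ apply Rmult_le_compat_l; [lra|]. apply Rmult_le_compat_l; [nra | exact Hexp]. }
    replace (INR d * (c * X * (exp (lam * x) / ((1 + lam) * INR d))))
      with (X * (exp (lam * x) / B)) by (unfold B; field; split; lra).
    rewrite Rmult_comm. apply Rmult_le_compat_l; [lra|]. nra.
Qed.

End LargeDegree.

Lemma pow_le_pow_antitone lam a b : 0 <= lam <= 1 -> (a <= b)%nat -> lam ^ b <= lam ^ a.
Proof.
  intros Hlam Hab. replace b with (a + (b - a))%nat by lia. rewrite pow_add.
  pose proof (pow_le lam a ltac:(lra)).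
  assert (lam ^ (b - a) <= 1) by (rewrite <- (pow1 (b - a)); apply pow_incr; lra).
  nra.
Qed.

Lemma sub_mul_pow_sub_nonpos lam a b : 0 <= lam <= 1 ->
  (INR a - INR b) * (lam ^ a - lam ^ b) <= 0.
Proof.
  intros Hlam. destruct (Nat.le_ge_cases a b) as [Hab|Hab].
  - pose proof (le_INR _ _ Hab). pose proof (pow_le_pow_antitone lam a b Hlam Hab). nra.
  - pose proof (le_INR _ _ Hab). pose proof (pow_le_pow_antitone lam b a Hlam Hab). nra.
Qed.

Lemma hc_average_size_le_uniform n adj lam : 0 < lam <= 1 ->
  size_moment n adj lam / partition_function n adj lam
  <= size_moment n adj 1 / partition_function n adj 1.
Proof.
  intros Hlam.
  pose proof (partition_function_pos n adj lam ltac:(lra)) as HZ.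
  pose proof (partition_function_pos n adj 1 ltac:(lra)) as HZ1.
  assert (Hcheb := lsum_chebyshev (all_subsets n) (hc_weight n adj 1)
           (fun s => INR (card n s)) (fun s => lam ^ card n s)).
  assert (Hw : forall s, hc_weight n adj lam s = hc_weight n adj 1 s * lam ^ card n s)
    by (intros s; unfold hc_weight; rewrite pow1; destruct (independentb n adj s); ring).
  unfold size_moment, partition_function, sum_subsets.
  rewrite (lsum_ext _ (fun s => hc_weight n adj lam s * INR (card n s))
             (fun s => hc_weight n adj 1 s * INR (card n s) * lam ^ card n s))
    by (intros; rewrite Hw; ring).
  rewrite (lsum_ext _ (hc_weight n adj lam) (fun s => hc_weight n adj 1 s * lam ^ card n s))
    by (intros; apply Hw).
  unfold partition_function, sum_subsets in HZ, HZ1.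
  rewrite (lsum_ext _ (hc_weight n adj lam) (fun s => hc_weight n adj 1 s * lam ^ card n s))
    in HZ by (intros; apply Hw).
  set (Z1 := lsum _ (hc_weight n adj 1)) in *.
  set (Z := lsum _ (fun s => hc_weight n adj 1 s * lam ^ card n s)) in *.
  unfold Rdiv. apply Rmult_le_reg_r with (Z * Z1); [nra|].
  replace (_ * / Z * (Z * Z1)) with (Z1 * lsum (all_subsets n)
      (fun s => hc_weight n adj 1 s * INR (card n s) * lam ^ card n s)) by (field; lra).
  replace (_ * / Z1 * (Z * Z1)) with (lsum (all_subsets n)
      (fun s => hc_weight n adj 1 s * INR (card n s)) * Z) by (field; lra).
  apply Hcheb.
  - intros s _. apply hc_weight_nonneg. lra.
  - intros s t _ _. apply sub_mul_pow_sub_nonpos. lra.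
Qed.

Lemma set_size_card s : set_size s = card (length s) s.
Proof.
  induction s as [|b s IH]; auto. simpl length. rewrite card_cons, <- IH.
  unfold set_size. simpl. destruct b; simpl; auto.
Qed.

Lemma sum_map_filter_INR {A} (g : A -> nat) p l :
  INR (fold_right Nat.add 0%nat (map g (filter p l)))
  = lsum l (fun s => if p s then INR (g s) else 0).
Proof. induction l; simpl; auto. destruct (p a); simpl; rewrite ?plus_INR, IHl; ring. Qed.

Lemma length_filter_INR {A} p (l : list A) :
  INR (length (filter p l)) = lsum l (fun s => if p s then 1 else 0).
Proof. induction l; simpl; auto. destruct (p a); simpl length; rewrite ?S_INR, IHl; ring. Qed.

Lemma avg_indep_size_hc n adj :
  avg_indep_size n adj = size_moment n adj 1 / partition_function n adj 1.
Proof.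
  unfold avg_indep_size, indep_sets. rewrite sum_map_filter_INR, length_filter_INR.
  unfold size_moment, partition_function, sum_subsets, hc_weight. f_equal; apply lsum_ext.
  - intros s Hs. rewrite set_size_card, (all_subsets_length n s Hs), pow1.
    destruct (independentb n adj s); ring.
  - intros s _. rewrite pow1. now destruct (independentb n adj s).
Qed.

Theorem theorem1p1 :
  forall eps : R, 0 < eps ->
  exists d0 : nat,
  forall (d n : nat) (adj : nat -> nat -> bool),
    (d0 <= d)%nat ->
    is_simple_graph n adj ->
    triangle_free n adj ->
    max_degree n adj d ->
    avg_indep_size n adj >= (1 - eps) * (ln (INR d) / INR d) * INR n.
Proof.
  intros eps Heps. set (e := Rmin eps (1/2)).
  assert (He : 0 < e <= 1/2) by (unfold e; split; [apply Rmin_glb_lt; lra | apply Rmin_r]).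
  assert (Hee : e <= eps) by apply Rmin_l.
  destruct (log_bound_of_occupancy_constraints e He) as [d0 [Hd0 Hlog]].
  exists d0. intros d n adj Hd Hsimple Htf [Hdeg [v [Hv _]]].
  destruct (average_occupancy_constraints n adj d (e / 2) Hsimple Htf Hdeg
              ltac:(lra) ltac:(lia)) as [M [Hexp Hdeg_avg]].
  pose proof (Hlog d Hd _ M (INR n) (pos_INR n) Hexp Hdeg_avg) as Hhc.
  pose proof (hc_average_size_le_uniform n adj (e / 2) ltac:(lra)) as Hunif.
  assert (Hlogd : 0 <= ln (INR d) / INR d * INR n).
  { assert (Hd1 : 1 <= INR d) by (apply (le_INR 1); lia).
    apply Rmult_le_pos; [|apply pos_INR]. apply Rmult_le_pos.
    - apply le_ln_of_exp_le; [lra | rewrite exp_0; lra].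
    - left. apply Rinv_0_lt_compat. lra. }
  rewrite avg_indep_size_hc. apply Rle_ge.
  rewrite Rmult_assoc. rewrite Rmult_assoc in Hhc. nra.
Qed.
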